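(* Let $\gamma_i\in\mathcal{M}_{k_i}\otimes\mathcal{M}_{k_i}$, $i=1,\dots,n$, be states whose images are not contained in the anti-symmetric subspace of $\mathbb{C}^{k_i}\otimes\mathbb{C}^{k_i}$, and let $S=S(\gamma_1,\dots,\gamma_n)\in\mathcal{M}_{k_1\cdots k_n}\otimes\mathcal{M}_{k_1\cdots k_n}$. Then: (1) $S^\Gamma\ge0$ if and only if $\gamma_i^\Gamma\ge0$ for every $i$; (2) $\mathcal{R}(S^\Gamma)\ge0$ if and only if $\mathcal{R}(\gamma_i^\Gamma)\ge0$ for every $i$; (3) $\mathcal{R}(S)=S$ if and only if $\mathcal{R}(\gamma_i)=\gamma_i$ for every $i$.
   Context: $\mathcal{M}_k$ denotes complex $k\times k$ matrices; $\mathcal{M}_k\otimes\mathcal{M}_m\cong\mathcal{M}_{km}$ via the Kronecker product. A state is a positive semidefinite Hermitian matrix (not necessarily of trace one). The anti-symmetric subspace of $\mathbb{C}^k\otimes\mathbb{C}^k$ is $\{x:F_kx=-x\}$, where $F_k(v\otimes w)=w\otimes v$. Shuffle: if $\gamma_i=\sum_{j=1}^{n_i}A^i_j\otimes B^i_j\in\mathcal{M}_{k_i}\otimes\mathcal{M}_{m_i}$, then $S(\gamma_1,\dots,\gamma_n)=\sum_{j_1,\dots,j_n}A^1_{j_1}\otimes\cdots\otimes A^n_{j_n}\otimes B^1_{j_1}\otimes\cdots\otimes B^n_{j_n}\in\mathcal{M}_{k_1\cdots k_n}\otimes\mathcal{M}_{m_1\cdots m_n}$. Partial transpose: $(\sum_iA_i\otimes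 B_i)^\Gamma=\sum_iA_i\otimes B_i^t$. Realignment on $\mathcal{M}_k\otimes\mathcal{M}_k$: identify $\mathcal{M}_k$ with $\mathbb{C}^k\otimes\mathbb{C}^k$ via $\mathrm{vec}(vw^t)=v\otimes w$ (extended linearly), and set $\mathcal{R}(A\otimes B)=\mathrm{vec}(A)\mathrm{vec}(B)^t$, extended linearly. *)

(* complex numbers are modelled by algC (algebraic complex
   numbers, a numClosedFieldType with conjugation and the usual partial order
   in which 0 <= z iff z is a nonnegative real). *)
From HB Require Import structures.
From mathcomp Require Import all_boot all_order all_algebra all_field.
Set Implicit Arguments. Unset Strict Implicit. Unset Printing Implicit Defensive.
Import Order.TTheory GRing.Theory Num.Theory.
Local Open Scope ring_scope.

(* Kronecker index conventions: an index r : 'I_(m*n) of C^m (x) C^n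
   corresponds to the pair (r %/ n, r %% n), i.e. e_a (x) e_b <-> a*n+b. *)
Lemma kfst_proof m n (r : 'I_(m * n)) : (r %/ n < m)%N.
Proof.
move: (nat_of_ord r) (ltn_ord r) => x; clear r; case: n => [|n]; first by rewrite muln0.
by move=> h; rewrite ltn_divLR.
Qed.
Lemma ksnd_proof m n (r : 'I_(m * n)) : (r %% n < n)%N.
Proof.
move: (nat_of_ord r) (ltn_ord r) => x; clear r; case: n => [|n]; first by rewrite muln0.
by move=> _; rewrite ltn_mod.
Qed.
Definition kfst m n (r : 'I_(m * n)) : 'I_m := Ordinal (kfst_proof r).
Definition ksnd m n (r : 'I_(m * n)) : 'I_n := Ordinal (ksnd_proof r).

(* entry of a square matrix accessed through natural-number indices
   (0 outside the range; never used out of range below) *)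
Definition mxn (N : nat) (A : 'M[algC]_N) (i j : nat) : algC :=
  match @insub _ (fun x => (x < N)%N) 'I_N i, @insub _ (fun x => (x < N)%N) 'I_N j with
  | Some i', Some j' => A i' j'
  | _, _ => 0
  end.

Lemma kidx_proof m n (a : 'I_m) (b : 'I_n) : (a * n + b < m * n)%N.
Proof.
have lt_b := ltn_ord b; have lt_a := ltn_ord a.
apply: (@leq_trans (a * n + n)); first by rewrite ltn_add2l.
by rewrite -mulSnr leq_mul2r lt_a orbT.
Qed.
Definition kidx m n (a : 'I_m) (b : 'I_n) : 'I_(m * n) := Ordinal (kidx_proof a b).

Definition adjmx (p q : nat) (A : 'M[algC]_(p, q)) : 'M[algC]_(q, p) :=
  \matrix_(i, j) (A j i)^*.

Definition psd (N : nat) (A : 'M[algC]_N) : Prop :=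
  adjmx A = A /\ forall v : 'cV[algC]_N, 0 <= (adjmx v *m A *m v) 0 0.

(* partial transpose on M_m (x) M_n : (A (x) B)^Gamma = A (x) B^t *)
Definition ptrans (m n : nat) (A : 'M[algC]_(m * n)) : 'M[algC]_(m * n) :=
  \matrix_(r, s) A (kidx (kfst r) (ksnd s)) (kidx (kfst s) (ksnd r)).

(* realignment on M_k (x) M_k : R(A (x) B) = vec(A) vec(B)^t with
   vec(v w^t) = v (x) w, i.e. vec(A) has entry A a c at index kidx a c.
   Hence R(gamma)[(a,c),(b,d)] = gamma[(a,b),(c,d)]. *)
Definition realign (k : nat) (A : 'M[algC]_(k * k)) : 'M[algC]_(k * k) :=
  \matrix_(r, s) A (kidx (kfst r) (kfst s)) (kidx (ksnd r) (ksnd s)).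

(* the flip operator F_k (v (x) w) = w (x) v on C^k (x) C^k *)
Definition flipmx (k : nat) : 'M[algC]_(k * k) :=
  \matrix_(r, s) ((kfst r == ksnd s) && (ksnd r == kfst s))%:R.

Definition antisym (k : nat) (x : 'cV[algC]_(k * k)) : Prop :=
  flipmx k *m x = - x.

Definition image_in_antisym (k : nat) (A : 'M[algC]_(k * k)) : Prop :=
  forall v : 'cV[algC]_(k * k), antisym (A *m v).

Definition kprod (n : nat) (k : 'I_n -> nat) : nat := \prod_(i < n) k i.

(* i-th digit (mixed radix, factor 1 most significant) of an index x of
   C^{k_1} (x) ... (x) C^{k_n}, under the Kronecker identification *)
Definition digit (n : nat) (k : 'I_n -> nat) (x : nat) (i : 'I_n) : nat :=
  (x %/ \prod_(j < n | (i < j)%N) k j) %% k i.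

(* If gamma_i = sum_j A^i_j (x) B^i_j then
   S[(a,b),(c,d)] = sum_{j_1..j_n} prod_i A^i_{j_i}[a_i,c_i] B^i_{j_i}[b_i,d_i]
                  = prod_i gamma_i[(a_i,b_i),(c_i,d_i)],
   which is the formula used here (entrywise unfolding of the definition). *)
Definition shuffle (n : nat) (k : 'I_n -> nat)
    (gamma : forall i : 'I_n, 'M[algC]_(k i * k i)) :
    'M[algC]_(kprod k * kprod k) :=
  \matrix_(r, s) \prod_(i < n)
     mxn (gamma i) (digit k (kfst r) i * k i + digit k (ksnd r) i)
                   (digit k (kfst s) i * k i + digit k (ksnd s) i).

From mathcomp Require Import all_boot all_order all_algebra all_field ring.
Set Implicit Arguments. Unset Strict Implicit. Unset Printing Implicit Defensive.
Import Order.POrderTheory GRing.Theory Num.Theory.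
Local Open Scope ring_scope.

(* Entrywise, the shuffle is a product over the factors, so partial
   transposition and realignment act factor by factor, the shuffle is
   multiplicative and commutes with adjoints, and its trace and the quadratic
   forms on product vectors are products.  Writing each psd factor as C^* C
   shows that shuffles of psd matrices are psd.  Conversely, if the shuffle is
   psd, fix in every other slot a vector on which that factor is positive
   (a basis vector e_r with gamma(r,r) > 0 for gamma^Gamma, the maximally
   entangled vector for R(gamma^Gamma), whose value is tr gamma): the
   quadratic form of the remaining factor is then a positive multiple of a
   nonnegative number.  For (3), tracing out all factors but one in
   R(S) = S gives R(gamma_j) = c gamma_j with c > 0, and R being an
   involution forces c = 1. *)

Section KroneckerIndex.

Lemma kfst_kidx m n (a : 'I_m) (b : 'I_n) : kfst (kidx a b) = a.
Proof.
apply: val_inj => /=; rewrite divnMDl ?divn_small ?addn0 //.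
by case: b => b /= lt_b; apply: leq_ltn_trans lt_b.
Qed.

Lemma ksnd_kidx m n (a : 'I_m) (b : 'I_n) : ksnd (kidx a b) = b.
Proof. by apply: val_inj => /=; rewrite modnMDl modn_small. Qed.

Lemma kidxK m n (r : 'I_(m * n)) : kidx (kfst r) (ksnd r) = r.
Proof. by apply: val_inj => /=; rewrite -divn_eq. Qed.

Lemma sum_kidx (R : nmodType) m n (F : 'I_(m * n) -> R) :
  \sum_(r < m * n) F r = \sum_(a < m) \sum_(b < n) F (kidx a b).
Proof.
rewrite pair_big /= (reindex (fun p : 'I_m * 'I_n => kidx p.1 p.2)) //=.
exists (fun r => (kfst r, ksnd r)) => [[a b] _|r _]; last by rewrite kidxK.
by rewrite kfst_kidx ksnd_kidx.
Qed.

Lemma sum_nat_mul (R : nmodType) m n (F : nat -> R) :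
  \sum_(0 <= r < m * n) F r = \sum_(0 <= a < m) \sum_(0 <= b < n) F (a * n + b)%N.
Proof.
rewrite big_nat_mul; apply: eq_bigr => a _.
rewrite -{1}[(a * n)%N]add0n big_addn mulSn addnK.
by apply: eq_bigr => b _; rewrite addnC.
Qed.

End KroneckerIndex.

Section MixedRadix.

Lemma prodr_natE (I : Type) (r : seq I) (P : pred I) (F : I -> nat) :
  (\prod_(i <- r | P i) F i)%R = (\prod_(i <- r | P i) F i)%N.
Proof. by apply: (big_rec2 (fun x y => x = y)) => //= i x y _ ->. Qed.

Lemma kprodE n (k : 'I_n -> nat) : kprod k = (\prod_(i < n) k i)%N.
Proof. exact: prodr_natE. Qed.

Lemma digitE n (k : 'I_n -> nat) x i :
  digit k x i = ((x %/ \prod_(j < n | (i < j)%N) k j) %% k i)%N.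
Proof. by rewrite /digit prodr_natE. Qed.

Lemma kprod_gt0 n (k : 'I_n -> nat) i : (0 < kprod k)%N -> (0 < k i)%N.
Proof. by rewrite kprodE (bigD1 i) //=; case: (k i). Qed.

Lemma digit_lt n (k : 'I_n -> nat) x i : (x < kprod k)%N -> (digit k x i < k i)%N.
Proof.
move=> lt_x; rewrite digitE ltn_pmod //.
by apply: kprod_gt0; apply: leq_ltn_trans lt_x.
Qed.

Lemma dvdn_digit_weight n (k : 'I_n -> nat) (i : 'I_n) :
  ((\prod_(j < n | (i < j)%N) k j) * k i %| kprod k)%N.
Proof.
rewrite kprodE [X in (_ %| X)%N](bigID (fun j : 'I_n => (i < j)%N)) /=.
by apply: dvdn_mul => //; rewrite (bigD1 i) ?ltnn //= dvdn_mulr.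
Qed.

Section Recursion.

Variables (n : nat) (k : 'I_n.+1 -> nat).
Let k' (i : 'I_n) := k (lift ord0 i).

Lemma kprod_recl : kprod k = (k ord0 * kprod k')%N.
Proof. by rewrite !kprodE big_ord_recl. Qed.

Lemma digit_ord0 a b : (a < k ord0)%N -> (b < kprod k')%N ->
  digit k (a * kprod k' + b) ord0 = a.
Proof.
move=> lt_a lt_b; rewrite digitE.
have -> : (\prod_(j < n.+1 | (@ord0 n < j)%N) k j)%N = kprod k'.
  by rewrite kprodE big_mkcond big_ord_recl /= mul1n.
rewrite divnMDl ?divn_small ?addn0 ?modn_small //.
exact: leq_ltn_trans lt_b.
Qed.

Lemma digit_lift a b (i : 'I_n) : (b < kprod k')%N ->
  digit k (a * kprod k' + b) (lift ord0 i) = digit k' b i.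
Proof.
move=> lt_b; rewrite !digitE.
have -> : (\prod_(j < n.+1 | (lift ord0 i < j)%N) k j)%N
          = (\prod_(j < n | (i < j)%N) k' j)%N.
  rewrite big_mkcond big_ord_recl /= [RHS]big_mkcond mul1n.
  by apply: eq_bigr => j _; rewrite /bump /= !add1n ltnS.
have /dvdnP [q def_k'] := dvdn_digit_weight k' i.
have w_gt0 : (0 < \prod_(j < n | (i < j)%N) k' j)%N.
  have : (0 < kprod k')%N by apply: leq_ltn_trans lt_b.
  by rewrite def_k' !muln_gt0 => /and3P[].
by rewrite def_k' (mulnC _ (k' i)) !mulnA divnMDl // modnMDl.
Qed.

End Recursion.

Lemma sum_prod_digit (R : comNzRingType) n (k : 'I_n -> nat) (f : 'I_n -> nat -> R) :
  \sum_(0 <= x < kprod k) \prod_(i < n) f i (digit k x i)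
  = \prod_(i < n) \sum_(0 <= a < k i) f i a.
Proof.
elim: n k f => [|n IHn] k f; first by rewrite kprodE !big_ord0 big_nat1 big_ord0.
rewrite kprod_recl sum_nat_mul big_ord_recl.
rewrite -(IHn _ (fun i => f (lift ord0 i))) big_distrl /=.
apply: eq_big_nat => a /andP[_ lt_a].
rewrite big_distrr /=; apply: eq_big_nat => b /andP[_ lt_b].
rewrite big_ord_recl digit_ord0 //; congr (_ * _).
by apply: eq_bigr => i _; rewrite digit_lift.
Qed.

Definition dig n (k : 'I_n -> nat) (x : 'I_(kprod k)) (i : 'I_n) : 'I_(k i) :=
  Ordinal (digit_lt i (ltn_ord x)).

Lemma sum_prod_dig (R : comNzRingType) n (k : 'I_n -> nat)
    (f : forall i, 'I_(k i) -> R) :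
  \sum_(x < kprod k) \prod_(i < n) f i (dig x i) = \prod_(i < n) \sum_(a < k i) f i a.
Proof.
pose g i (a : nat) := if insub a is Some a' then f i a' else 0.
have gE i (a : 'I_(k i)) : f i a = g i a by rewrite /g valK.
under eq_bigr => x _ do under eq_bigr => i _ do rewrite gE.
under [RHS]eq_bigr => i _ do under eq_bigr => a _ do rewrite gE.
rewrite -(big_mkord xpredT (fun x => \prod_(i < n) g i (digit k x i))) sum_prod_digit.
by apply: eq_bigr => i _; rewrite big_mkord.
Qed.

End MixedRadix.

Section Shuffle.

Variables (n : nat) (k : 'I_n -> nat).
Local Notation K := (kprod k).

(* the index of the i-th factor C^{k_i} (x) C^{k_i} inside a shuffled index *)
Definition shidx (r : 'I_(K * K)) (i : 'I_n) : 'I_(k i * k i) :=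
  kidx (dig (kfst r) i) (dig (ksnd r) i).

Lemma sum_prod_shidx (R : comNzRingType) (f : forall i, 'I_(k i * k i) -> R) :
  \sum_(r < K * K) \prod_(i < n) f i (shidx r i)
  = \prod_(i < n) \sum_(p < k i * k i) f i p.
Proof.
rewrite sum_kidx.
transitivity (\sum_(a < K) \prod_(i < n) \sum_(y < k i) f i (kidx (dig a i) y)).
  apply: eq_bigr => a _; rewrite -(sum_prod_dig (fun i y => f i (kidx (dig a i) y))).
  by apply: eq_bigr => b _; rewrite /shidx kfst_kidx ksnd_kidx.
rewrite (sum_prod_dig (fun i x => \sum_(y < k i) f i (kidx x y))).
by apply: eq_bigr => i _; rewrite sum_kidx.
Qed.

Lemma sum2_prod_shidx (R : comNzRingType)
    (F : forall i, 'I_(k i * k i) -> 'I_(k i * k i) -> R) :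
  \sum_(r < K * K) \sum_(s < K * K) \prod_(i < n) F i (shidx r i) (shidx s i)
  = \prod_(i < n) \sum_(p < k i * k i) \sum_(q < k i * k i) F i p q.
Proof.
rewrite -(sum_prod_shidx (fun i p => \sum_(q < k i * k i) F i p q)).
by apply: eq_bigr => r _; rewrite (sum_prod_shidx (fun i => F i (shidx r i))).
Qed.

Lemma mxn_ord N (A : 'M[algC]_N) (p q : 'I_N) : mxn A p q = A p q.
Proof.
rewrite /mxn; case: insubP => [p' _ /val_inj ->|]; last by rewrite ltn_ord.
by case: insubP => [q' _ /val_inj ->|]; last by rewrite ltn_ord.
Qed.

Lemma shuffleE (X : forall i, 'M[algC]_(k i * k i)) r s :
  shuffle X r s = \prod_(i < n) X i (shidx r i) (shidx s i).
Proof.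
rewrite mxE; apply: eq_bigr => i _.
exact: (mxn_ord (X i) (shidx r i) (shidx s i)).
Qed.

Lemma eq_shuffle (X Y : forall i, 'M[algC]_(k i * k i)) :
  (forall i, X i = Y i) -> shuffle X = shuffle Y.
Proof.
by move=> eXY; apply/matrixP => r s; rewrite !shuffleE; apply: eq_bigr => i _; rewrite eXY.
Qed.

Lemma shuffleM (X Y : forall i, 'M[algC]_(k i * k i)) :
  shuffle X *m shuffle Y = shuffle (fun i => X i *m Y i).
Proof.
apply/matrixP => r t; rewrite mxE shuffleE.
under eq_bigr => s _ do rewrite !shuffleE -big_split.
rewrite (sum_prod_shidx (fun i q => X i (shidx r i) q * Y i q (shidx t i))).
by apply: eq_bigr => i _; rewrite mxE.
Qed.

Lemma mxtrace_shuffle (X : forall i, 'M[algC]_(k i * k i)) :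
  \tr (shuffle X) = \prod_(i < n) \tr (X i).
Proof.
rewrite /mxtrace; under eq_bigr => r _ do rewrite shuffleE.
exact: (sum_prod_shidx (fun i p => X i p p)).
Qed.

Lemma adjmx_shuffle (X : forall i, 'M[algC]_(k i * k i)) :
  adjmx (shuffle X) = shuffle (fun i => adjmx (X i)).
Proof.
apply/matrixP => r s; rewrite mxE !shuffleE rmorph_prod.
by apply: eq_bigr => i _; rewrite mxE.
Qed.

Lemma ptrans_shuffle (X : forall i, 'M[algC]_(k i * k i)) :
  ptrans (shuffle X) = shuffle (fun i => ptrans (X i)).
Proof.
apply/matrixP => r s; rewrite mxE !shuffleE; apply: eq_bigr => i _.
by rewrite mxE /shidx !kfst_kidx !ksnd_kidx.
Qed.

Lemma realign_shuffle (X : forall i, 'M[algC]_(k i * k i)) :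
  realign (shuffle X) = shuffle (fun i => realign (X i)).
Proof.
apply/matrixP => r s; rewrite mxE !shuffleE; apply: eq_bigr => i _.
by rewrite mxE /shidx !kfst_kidx !ksnd_kidx.
Qed.

End Shuffle.

Section Adjoint.

Lemma adjmxE p q (A : 'M[algC]_(p, q)) : adjmx A = map_mx Num.conj A^T.
Proof. by apply/matrixP => i j; rewrite !mxE. Qed.

Lemma adjmxM p q r (A : 'M[algC]_(p, q)) (B : 'M[algC]_(q, r)) :
  adjmx (A *m B) = adjmx B *m adjmx A.
Proof. by rewrite !adjmxE trmx_mul map_mxM. Qed.

Lemma adjmxK p q (A : 'M[algC]_(p, q)) : adjmx (adjmx A) = A.
Proof. by apply/matrixP => i j; rewrite !mxE conjCK. Qed.

Lemma adjmxD p q (A B : 'M[algC]_(p, q)) : adjmx (A + B) = adjmx A + adjmx B.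
Proof. by apply/matrixP => i j; rewrite !mxE rmorphD. Qed.

Lemma adjmxZ p q c (A : 'M[algC]_(p, q)) : adjmx (c *: A) = c^* *: adjmx A.
Proof. by apply/matrixP => i j; rewrite !mxE rmorphM. Qed.

Lemma adjmx_delta p q (i : 'I_p) (j : 'I_q) : adjmx (delta_mx i j) = delta_mx j i.
Proof. by apply/matrixP => a b; rewrite !mxE rmorph_nat andbC. Qed.

Definition qform N (A : 'M[algC]_N) (v : 'cV[algC]_N) : algC :=
  (adjmx v *m A *m v) 0 0.

Lemma sesqE N (A : 'M[algC]_N) (u v : 'cV[algC]_N) :
  (adjmx u *m A *m v) 0 0 = \sum_(p < N) \sum_(q < N) (u p 0)^* * A p q * v q 0.
Proof.
rewrite mxE; under eq_bigr => q _ do rewrite mxE big_distrl /=.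
rewrite exchange_big /=; apply: eq_bigr => p _; apply: eq_bigr => q _.
by rewrite mxE.
Qed.

Lemma sesq_delta N (A : 'M[algC]_N) (p q : 'I_N) :
  (adjmx (delta_mx p 0 : 'cV_N) *m A *m (delta_mx q 0 : 'cV_N)) 0 0 = A p q.
Proof. by rewrite adjmx_delta -(rowE p A) -(colE q (row p A)) !mxE. Qed.

Lemma qform_delta N (A : 'M[algC]_N) (p : 'I_N) : qform A (delta_mx p 0) = A p p.
Proof. exact: sesq_delta. Qed.

Lemma qform_deltaD N (A : 'M[algC]_N) (p q : 'I_N) c :
  qform A (delta_mx p 0 + c *: delta_mx q 0)
  = A p p + c^* * c * A q q + c * A p q + c^* * A q p.
Proof.
rewrite /qform adjmxD adjmxZ !mulmxDl !mulmxDr -!scalemxAl -!scalemxAr.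
by rewrite !(sesq_delta, mxE); ring.
Qed.

(* Polarization: the form is real on e_p + c e_q for c = 1 and c = 'i. *)
Lemma qform_ge0_hermitian N (A : 'M[algC]_N) :
  (forall v, 0 <= qform A v) -> adjmx A = A.
Proof.
move=> qA_ge0; apply/matrixP => p q; rewrite mxE.
have qA_real v : (qform A v)^* = qform A v := geC0_conj (qA_ge0 v).
have diag_real r : (A r r)^* = A r r by rewrite -qform_delta qA_real.
have cross_real c : (c * A p q + c^* * A q p)^* = c * A p q + c^* * A q p.
  have E := qA_real (delta_mx p 0 + c *: delta_mx q 0).
  have Eqq : (c^* * c * A q q)^* = c^* * c * A q q.
    by rewrite !rmorphM /= conjCK diag_real [c * _]mulrC.
  rewrite qform_deltaD !rmorphD /= diag_real Eqq in E.
  by apply: (addrI (A p p + c^* * c * A q q)); rewrite rmorphD !addrA.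
have c1 := cross_real 1; have ci := cross_real 'i.
rewrite conjC1 !mul1r in c1; rewrite conjCi in ci.
set z := A p q in c1 ci *; set w := A q p in c1 ci *.
have key : 'i * (2 * (w^* - z))
         = 'i * ((z + w)^* - (z + w)) + (('i * z + - 'i * w)^* - ('i * z + - 'i * w)).
  by rewrite !rmorphD !rmorphM /= rmorphN /= conjCi; ring.
rewrite c1 ci !subrr addr0 mulr0 in key.
by move/eqP: key; rewrite !mulf_eq0 (negbTE (neq0Ci _)) pnatr_eq0 subr_eq0 => /eqP.
Qed.

End Adjoint.

Section Psd.

Variable N : nat.
Implicit Types A C : 'M[algC]_N.

Lemma psd_diag_ge0 A p : psd A -> 0 <= A p p.
Proof. by case=> _ /(_ (delta_mx p 0)); rewrite -/(qform A _) qform_delta. Qed.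

Lemma psd_diag_eq0 A : psd A -> (forall r, A r r = 0) -> A = 0.
Proof.
move=> [herm qA_ge0] diag0; apply/matrixP => p q; rewrite mxE.
have Aqp : A q p = (A p q)^* by move/matrixP: herm => /(_ q p); rewrite mxE => <-.
pose v : 'cV[algC]_N := delta_mx p 0 + (- (A p q)^*) *: delta_mx q 0.
have Q : qform A v = - (2 * (A p q * (A p q)^*)).
  by rewrite qform_deltaD !diag0 Aqp rmorphN /= conjCK; ring.
have := qA_ge0 v; rewrite -/(qform A v) Q oppr_ge0 pmulr_rle0 // => norm_le0.
have : A p q * (A p q)^* == 0 by rewrite eq_le norm_le0 mul_conjC_ge0.
by rewrite mul_conjC_eq0 => /eqP.
Qed.

Lemma psd_diag_gt0 A : psd A -> A != 0 -> exists r, 0 < A r r.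
Proof.
move=> psdA nzA; have [/existsP[r pos]|/existsPn no_pos] := boolP [exists r, 0 < A r r].
  by exists r.
case/eqP: nzA; apply: psd_diag_eq0 => // r; apply/eqP.
by move: (no_pos r); rewrite lt0r psd_diag_ge0 // andbT negbK.
Qed.

Lemma psd_mxtrace_gt0 A : psd A -> A != 0 -> 0 < \tr A.
Proof.
move=> psdA /(psd_diag_gt0 psdA) [r pos].
rewrite /mxtrace (bigD1 r) //= ltr_wpDr //.
by apply: sumr_ge0 => i _; apply: psd_diag_ge0.
Qed.

Lemma psd_adjmx_mul C : psd (adjmx C *m C).
Proof.
split=> [|v]; first by rewrite adjmxM adjmxK.
have -> : adjmx v *m (adjmx C *m C) *m v = adjmx (C *m v) *m (C *m v).
  by rewrite adjmxM !mulmxA.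
by rewrite mxE; apply: sumr_ge0 => j _; rewrite mxE mulrC mul_conjC_ge0.
Qed.

Definition psd_factor A : 'M[algC]_N :=
  diag_mx (map_mx sqrtC (spectral_diag A)) *m spectralmx A.

(* Spectral theorem: A = P^* D P with P unitary and D >= 0, so A = C^* C for
   C = sqrt(D) P. *)
Lemma psd_factorP A : psd A -> A = adjmx (psd_factor A) *m psd_factor A.
Proof.
move=> psdA; rewrite /psd_factor.
have herm : A \is hermsymmx by rewrite is_hermitianmxE expr0 scale1r -adjmxE psdA.1.
have /orthomx_spectralP := hermitian_normalmx herm.
have P_unitary := spectral_unitarymx A.
set P := spectralmx A; set d := spectral_diag A => defA.
rewrite invmx_unitary // -adjmxE in defA.
have PPadj : P *m adjmx P = 1%:M by rewrite adjmxE; apply/unitarymxP.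
have diagA : P *m A *m adjmx P = diag_mx d.
  by rewrite defA !mulmxA PPadj mul1mx -mulmxA PPadj mulmx1.
have d_ge0 j : 0 <= d 0 j.
  pose e : 'cV[algC]_N := delta_mx j 0; have := psdA.2 (adjmx P *m e).
  have -> : adjmx (adjmx P *m e) *m A *m (adjmx P *m e) = adjmx e *m (P *m A *m adjmx P) *m e.
    by rewrite adjmxM adjmxK !mulmxA.
  by rewrite diagA sesq_delta mxE eqxx mulr1n.
set S := diag_mx (map_mx sqrtC d).
have S_herm : adjmx S = S.
  apply/matrixP => i j; rewrite !mxE eq_sym; case: eqP => [->|_];
    by rewrite ?mulr0n ?conjC0 // !mulr1n geC0_conj // sqrtC_ge0.
have SS : S *m S = diag_mx d.
  by rewrite mulmx_diag; congr diag_mx; apply/rowP => j; rewrite !mxE -expr2 sqrtCK.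
by rewrite {1}defA adjmxM S_herm -(mulmxA _ S) (mulmxA S) SS !mulmxA.
Qed.

End Psd.

Section ShufflePsd.

Variables (n : nat) (k : 'I_n -> nat).
Local Notation K := (kprod k).
Implicit Types X : forall i, 'M[algC]_(k i * k i).

Lemma psd_shuffle X : (forall i, psd (X i)) -> psd (shuffle X).
Proof.
move=> psdX; rewrite (eq_shuffle (fun i => psd_factorP (psdX i))).
rewrite -shuffleM -adjmx_shuffle; exact: psd_adjmx_mul.
Qed.

(* the tensor product of the vectors u_i, in the shuffled index order *)
Definition prodvec (u : forall i, 'cV[algC]_(k i * k i)) : 'cV[algC]_(K * K) :=
  \col_r \prod_(i < n) u i (shidx r i) 0.

Lemma qform_shuffle_prodvec X u :
  qform (shuffle X) (prodvec u) = \prod_(i < n) qform (X i) (u i).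
Proof.
rewrite /qform sesqE; under [RHS]eq_bigr => i _ do rewrite sesqE.
rewrite -(sum2_prod_shidx (fun i p q => (u i p 0)^* * X i p q * u i q 0)).
apply: eq_bigr => r _; apply: eq_bigr => s _.
by rewrite shuffleE !mxE rmorph_prod -!big_split.
Qed.

Lemma psd_shuffle_factor X (w : forall i, 'cV[algC]_(k i * k i)) :
  (forall i, 0 < qform (X i) (w i)) -> psd (shuffle X) -> forall j, psd (X j).
Proof.
move=> w_pos psdS j.
suff qX_ge0 v : 0 <= qform (X j) v by split=> //; apply: qform_ge0_hermitian.
have := psdS.2 (prodvec (dfwith w v)).
rewrite -/(qform _ _) qform_shuffle_prodvec (bigD1 j) //= dfwith_in.
rewrite pmulr_lge0 //; apply: prodr_gt0 => i ij.
by rewrite dfwith_out 1?eq_sym.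
Qed.

Lemma psd_shuffleP X :
  (forall i, exists w, 0 < qform (X i) w) ->
  psd (shuffle X) <-> (forall i, psd (X i)).
Proof.
move=> witness; split; last exact: psd_shuffle.
have [w w_pos] := fin_all_exists witness.
exact: psd_shuffle_factor w_pos.
Qed.

End ShufflePsd.

Section PartialTransposeRealignment.

Variable m : nat.
Implicit Types A : 'M[algC]_(m * m).

Lemma ptrans_diag A r : ptrans A r r = A r r.
Proof. by rewrite mxE kidxK. Qed.

Lemma realignK A : realign (realign A) = A.
Proof. by apply/matrixP => r s; rewrite !mxE !kfst_kidx !ksnd_kidx !kidxK. Qed.

Lemma realignZ c A : realign (c *: A) = c *: realign A.
Proof. by apply/matrixP => r s; rewrite !mxE. Qed.

Definition omega : 'cV[algC]_(m * m) := \col_r (kfst r == ksnd r)%:R.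

Lemma qform_omega A :
  qform A omega = \sum_(a < m) \sum_(b < m) A (kidx a a) (kidx b b).
Proof.
rewrite /qform sesqE sum_kidx; apply: eq_bigr => a _.
rewrite (bigD1 a) //= [X in _ + X]big1 => [|a' a'a]; last first.
  apply: big1 => s _.
  by rewrite !mxE kfst_kidx ksnd_kidx eq_sym (negbTE a'a) conjC0 !mul0r.
rewrite addr0 sum_kidx; apply: eq_bigr => b _.
rewrite (bigD1 b) //= [X in _ + X]big1 => [|b' b'b]; last first.
  by rewrite !mxE !kfst_kidx !ksnd_kidx eq_sym (negbTE b'b) mulr0.
by rewrite !mxE !kfst_kidx !ksnd_kidx !eqxx conjC1 mul1r mulr1 addr0.
Qed.

Lemma qform_omega_realign_ptrans A : qform (realign (ptrans A)) omega = \tr A.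
Proof.
rewrite qform_omega /mxtrace sum_kidx; apply: eq_bigr => a _; apply: eq_bigr => b _.
by rewrite !mxE !kfst_kidx !ksnd_kidx.
Qed.

Lemma mxtrace_realign A : \tr (realign A) = qform A omega.
Proof.
rewrite qform_omega /mxtrace sum_kidx; apply: eq_bigr => a _; apply: eq_bigr => b _.
by rewrite !mxE !kfst_kidx !ksnd_kidx.
Qed.

Lemma realign_eqZ_id A c : A != 0 -> 0 <= c -> realign A = c *: A -> realign A = A.
Proof.
move=> nzA c_ge0 RA; suff c1 : c = 1 by rewrite RA c1 scale1r.
have /eqP : (c ^+ 2 - 1) *: A = 0.
  by rewrite scalerBl scale1r expr2 -scalerA -RA -realignZ -RA realignK subrr.
by rewrite scaler_eq0 (negbTE nzA) orbF subr_eq0 pexpr_eq1 // => /eqP.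
Qed.

End PartialTransposeRealignment.

Lemma mxtrace_mul_delta N (A : 'M[algC]_N) p q : \tr (A *m delta_mx q p) = A p q.
Proof.
rewrite /mxtrace (bigD1 p) //= big1 => [|i ip]; last first.
  by rewrite mxE big1 // => j _; rewrite mxE (negbTE ip) andbF mulr0.
rewrite addr0 mxE (bigD1 q) //= big1 => [|j jq]; last by rewrite mxE (negbTE jq) mulr0.
by rewrite mxE !eqxx mulr1 addr0.
Qed.

Section ShuffleRealign.

Variables (n : nat) (k : 'I_n -> nat).
Implicit Types X Y : forall i, 'M[algC]_(k i * k i).

(* Pairing with the shuffle of identities and one matrix unit traces out
   every factor but the j-th. *)
Lemma shuffle_eq_factor X Y j : shuffle X = shuffle Y ->
  (\prod_(i < n | i != j) \tr (X i)) *: X j = (\prod_(i < n | i != j) \tr (Y i)) *: Y j.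
Proof.
move=> eXY; apply/matrixP => p q; rewrite !mxE.
pose T := dfwith (fun i => 1%:M : 'M[algC]_(k i * k i)) (delta_mx q p).
suff trT Z : \tr (shuffle Z *m shuffle T) = (\prod_(i < n | i != j) \tr (Z i)) * Z j p q.
  by rewrite -!trT eXY.
rewrite shuffleM mxtrace_shuffle (bigD1 j) //= /T dfwith_in mxtrace_mul_delta mulrC.
by congr (_ * _); apply: eq_bigr => i ij; rewrite dfwith_out 1?eq_sym // mulmx1.
Qed.

Lemma shuffle_realign_id (gamma : forall i, 'M[algC]_(k i * k i)) :
  (forall i, psd (gamma i)) -> (forall i, gamma i != 0) ->
  realign (shuffle gamma) = shuffle gamma -> forall j, realign (gamma j) = gamma j.
Proof.
rewrite realign_shuffle => psd_gamma nz_gamma eq_gamma j.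
have tr_gt0 i : 0 < \tr (gamma i) by apply: psd_mxtrace_gt0.
have trR_ge0 i : 0 <= \tr (realign (gamma i)).
  by rewrite mxtrace_realign; apply: (psd_gamma i).2.
have eq_tr := congr1 mxtrace eq_gamma.
rewrite !mxtrace_shuffle (bigD1 j) // [RHS](bigD1 j) //= in eq_tr.
set Ps := \prod_(i < n | i != j) _ in eq_tr; set Pt := \prod_(i < n | i != j) _ in eq_tr.
have Pt_gt0 : 0 < Pt by apply: prodr_gt0.
have Ps_gt0 : 0 < Ps.
  rewrite lt0r prodr_ge0 // andbT; apply: contraTneq (mulr_gt0 (tr_gt0 j) Pt_gt0).
  by move=> Ps0; rewrite -eq_tr Ps0 mulr0 ltxx.
apply: (realign_eqZ_id (c := Pt / Ps)) => //; first by rewrite divr_ge0 ?ltW.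
apply: (scalerI (lt0r_neq0 Ps_gt0)); rewrite scalerA mulrC divfK ?lt0r_neq0 //.
exact: shuffle_eq_factor.
Qed.

End ShuffleRealign.

Lemma not_image_in_antisym_neq0 m (A : 'M[algC]_(m * m)) :
  ~ image_in_antisym A -> A != 0.
Proof.
apply: contra_notN => /eqP-> v.
by rewrite /antisym mul0mx mulmx0 oppr0.
Qed.

Theorem mainTheorem16 (n : nat) (k : 'I_n -> nat)
    (gamma : forall i : 'I_n, 'M[algC]_(k i * k i)) :
  (forall i, psd (gamma i)) ->
  (forall i, ~ image_in_antisym (gamma i)) ->
  [/\ psd (ptrans (shuffle gamma)) <-> (forall i, psd (ptrans (gamma i))),
      psd (realign (ptrans (shuffle gamma))) <->
        (forall i, psd (realign (ptrans (gamma i))))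
    & realign (shuffle gamma) = shuffle gamma <->
        (forall i, realign (gamma i) = gamma i)].
Proof.
move=> psd_gamma /(_ _)/not_image_in_antisym_neq0 nz_gamma.
split.
- rewrite ptrans_shuffle; apply: psd_shuffleP => i.
  have [r pos] := psd_diag_gt0 (psd_gamma i) (nz_gamma i).
  by exists (delta_mx r 0); rewrite qform_delta ptrans_diag.
- rewrite ptrans_shuffle realign_shuffle; apply: psd_shuffleP => i.
  by exists (omega _); rewrite qform_omega_realign_ptrans psd_mxtrace_gt0.
- split; first exact: shuffle_realign_id.
  by rewrite realign_shuffle; apply: eq_shuffle.
Qed.
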